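(* Let $(C_*,\partial_C,\ell_C)$ and $(D_*,\partial_D,\ell_D)$ be ascending chain complexes over a field $\kappa$ such that each $C_k$ admits an $\ell_C$-orthogonal basis, each $D_k$ admits an $\ell_D$-orthogonal basis, and $C_k=D_k=0$ for all $k<0$. Then every filtered quasi-isomorphism $f\colon C_*\to D_*$ is a filtered homotopy equivalence.
   Context: An ascending chain complex over $\kappa$ is a triple $(C_*,\partial,\ell)$ where $(C_*=\bigoplus_{k\in\mathbb{Z}}C_k,\partial)$ is a chain complex of $\kappa$-vector spaces and $\ell\colon C_*\to\mathbb{R}\cup\{-\infty\}$ satisfies: $\ell(x)=-\infty$ iff $x=0$; $\ell(\sum_i c_ix_i)\le\max\{\ell(x_i): c_i\neq 0\}$, with equality if the $x_i$ lie in pairwise distinct degrees; and $\ell(\partial x)\le\ell(x)$. A subset $S$ of nonzero vectors is $\ell$-orthogonal if $\ell(\sum c_iv_i)=\max\{\ell(v_i):c_i\ne0\}$ for all finitely many distinct $v_i\in S$ and $c_i\in\kappa$. A filtered chain map $f\colon C_*\to D_*$ is a chain map with $\ell_D\circ f\le\ell_C$; it is a filtered quasi-isomorphism if for each $k\in\mathbb{Z}$ and $t\in\mathbb{R}$ the induced map $H_k(C^{\le t}_* )\to H_k(D^{\le t}_* )$ is an isomorphism, where $C^{\le t}_*=\{c:\ell_C(c)\le t\}$. A filtered homotopy equivalence is a filtered chain map $f$ for which there exist a filtered chain map $g\colon D_*\to C_*$ and maps $K^C\colon C_*\to C_{*+1}$, $K^D\colon D_*\to D_{*+1}$ with $\ell_C\circ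 K^C\le\ell_C$, $\ell_D\circ K^D\le\ell_D$, $\partial_CK^C+K^C\partial_C=1-gf$, $\partial_DK^D+K^D\partial_D=1-fg$. *)

From HB Require Import structures.
From mathcomp Require Import all_boot all_order all_algebra.
From mathcomp Require Import reals constructive_ereal.

Set Implicit Arguments.
Unset Strict Implicit.
Unset Printing Implicit Defensive.

Import Order.TTheory GRing.Theory Num.Theory.
Local Open Scope ring_scope.

Definition emax_over (R : realType) (n : nat) (P : pred 'I_n)
    (a : 'I_n -> \bar R) : \bar R :=
  \big[Order.max/-oo%E]_(i < n | P i) a i.

(* Axioms of the filtration function restricted to one degree:
   values in R u {-oo}, -oo exactly at 0, and the ultrametric inequality
   for finite linear combinations. *)
Definition filtration_axioms (kappa : fieldType) (R : realType)
    (V : lmodType kappa) (l : V -> \bar R) : Prop :=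
  [/\ (forall x : V, l x = -oo%E <-> x = 0),
      (forall x : V, l x <> +oo%E) &
      (forall (n : nat) (c : 'I_n -> kappa) (x : 'I_n -> V),
         (l (\sum_(i < n) c i *: x i)%R <= emax_over (fun i => (c i != 0)%R)
                                            (fun i => l (x i)))%E)].

(* An ascending chain complex, encoded degreewise: C_k = obj k,
   the differential C_{k+1} -> C_k is bd k, and ell on C_k is filt k. *)
Unset Implicit Arguments.
Record ascending_complex (kappa : fieldType) (R : realType) := AscComplex {
  obj : int -> lmodType kappa;
  bd : forall k : int, {linear obj (k + 1) -> obj k};
  filt : forall k : int, obj k -> \bar R;
  bd_bd : forall (k : int) (x : obj (k + 1 + 1)), bd k (bd (k + 1) x) = 0;
  filt_ax : forall k : int, filtration_axioms (filt k);
  filt_bd : forall (k : int) (x : obj (k + 1)), (filt k (bd k x) <= filt (k + 1) x)%E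
}.
Set Implicit Arguments.
Arguments obj {kappa R} a k.
Arguments bd {kappa R} a k.
Arguments filt {kappa R} a k.

Definition l_orthogonal (kappa : fieldType) (R : realType) (V : lmodType kappa)
    (l : V -> \bar R) (S : V -> Prop) : Prop :=
  (forall v, S v -> v <> 0) /\
  (forall (n : nat) (s : 'I_n -> V) (c : 'I_n -> kappa),
     injective s -> (forall i, S (s i)) ->
     l (\sum_(i < n) c i *: s i) = emax_over (fun i => c i != 0) (fun i => l (s i))).

Definition is_basis (kappa : fieldType) (V : lmodType kappa) (S : V -> Prop) : Prop :=
  (forall v : V, exists n (s : 'I_n -> V) (c : 'I_n -> kappa),
      (forall i, S (s i)) /\ v = \sum_(i < n) c i *: s i) /\
  (forall (n : nat) (s : 'I_n -> V) (c : 'I_n -> kappa),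
      injective s -> (forall i, S (s i)) ->
      \sum_(i < n) c i *: s i = 0 -> forall i, c i = 0).

Definition has_orthogonal_basis (kappa : fieldType) (R : realType)
    (V : lmodType kappa) (l : V -> \bar R) : Prop :=
  exists S : V -> Prop, is_basis S /\ l_orthogonal l S.

Definition filtered_chain_map (kappa : fieldType) (R : realType)
    (C D : ascending_complex kappa R)
    (f : forall k : int, {linear obj C k -> obj D k}) : Prop :=
  (forall (k : int) (x : obj C (k + 1)), f k (bd C k x) = bd D k (f (k + 1) x)) /\
  (forall (k : int) (x : obj C k), (filt D k (f k x) <= filt C k x)%E).

(* The induced map H_{k+1}(C^{<=t}) -> H_{k+1}(D^{<=t}) is bijective,
   for every k : int (hence every degree) and every t : R. *)
Definition filtered_quasi_iso (kappa : fieldType) (R : realType)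
    (C D : ascending_complex kappa R)
    (f : forall k : int, {linear obj C k -> obj D k}) : Prop :=
  forall (k : int) (t : R),
    (* surjectivity *)
    (forall y : obj D (k + 1),
       (filt D (k + 1) y <= t%:E)%E -> bd D k y = 0 ->
       exists x : obj C (k + 1),
         [/\ (filt C (k + 1) x <= t%:E)%E, bd C k x = 0 &
             exists z : obj D (k + 1 + 1),
               (filt D (k + 1 + 1) z <= t%:E)%E /\ y - f (k + 1) x = bd D (k + 1) z]) /\
    (* injectivity *)
    (forall x : obj C (k + 1),
       (filt C (k + 1) x <= t%:E)%E -> bd C k x = 0 ->
       (exists z : obj D (k + 1 + 1),
          (filt D (k + 1 + 1) z <= t%:E)%E /\ f (k + 1) x = bd D (k + 1) z) ->
       exists w : obj C (k + 1 + 1),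
         (filt C (k + 1 + 1) w <= t%:E)%E /\ x = bd C (k + 1) w).

Definition filtered_homotopy_equiv (kappa : fieldType) (R : realType)
    (C D : ascending_complex kappa R)
    (f : forall k : int, {linear obj C k -> obj D k}) : Prop :=
  filtered_chain_map f /\
  exists g : forall k : int, {linear obj D k -> obj C k},
  exists KC : forall k : int, {linear obj C k -> obj C (k + 1)},
  exists KD : forall k : int, {linear obj D k -> obj D (k + 1)},
  [/\ filtered_chain_map g,
      (forall (k : int) (x : obj C k), (filt C (k + 1) (KC k x) <= filt C k x)%E),
      (forall (k : int) (x : obj D k), (filt D (k + 1) (KD k x) <= filt D k x)%E),
      (forall (k : int) (x : obj C (k + 1)),
         bd C (k + 1) (KC (k + 1) x) + KC k (bd C k x) = x - g (k + 1) (f (k + 1) x)) &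
      (forall (k : int) (y : obj D (k + 1)),
         bd D (k + 1) (KD (k + 1) y) + KD k (bd D k y) = y - f (k + 1) (g (k + 1) y))].

From HB Require Import structures.
From mathcomp Require Import all_boot all_order all_algebra.
From mathcomp Require Import reals constructive_ereal boolp zify.
Import Order.TTheory GRing.Theory Num.Theory.
Local Open Scope ring_scope.

Set Implicit Arguments.
Unset Strict Implicit.
Unset Printing Implicit Defensive.

(* Let X be the mapping cone of f, with X_j = C_j x D_(j+1). Since f is a filtered
   quasi-isomorphism, every cycle z of X bounds some w with l(w) <= l(z). Spaces with
   orthogonal bases are projective with respect to such filtered surjections, so a
   filtered contracting homotopy s of X can be built degree by degree, starting in the
   degrees where X vanishes. The components of s are a filtered homotopy inverse g of f
   and the homotopies K^C, K^D. *)

Section Filtration.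
Variables (K : fieldType) (R : realType) (V : lmodType K) (l : V -> \bar R).
Hypothesis hl : filtration_axioms l.

Lemma filtration0 : l 0 = -oo%E.
Proof. by case: hl => h _ _; apply/h. Qed.

Lemma filtration_eq0 x : l x = -oo%E -> x = 0.
Proof. by case: hl => h _ _ /h. Qed.

Lemma filtration_neq_pinfty x : l x <> +oo%E.
Proof. by case: hl. Qed.

Lemma filtrationD a b : (l (a + b) <= maxe (l a) (l b))%E.
Proof.
case: hl => _ _ /(_ 2 (fun _ => 1) (fun i : 'I_2 => if val i == 0%N then a else b)).
rewrite /emax_over big_mkcond !big_ord_recl !big_ord0 /= !oner_neq0 !scale1r addr0.
by rewrite !big_ord_recl !big_ord0 /= maxeNy.
Qed.

Lemma filtrationZ c a : (l (c *: a) <= l a)%E.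
Proof.
have [->|c_neq0] := eqVneq c 0; first by rewrite scale0r filtration0 leNye.
case: hl => _ _ /(_ 1 (fun _ => c) (fun _ => a)).
by rewrite /emax_over big_ord1 big_mkcond big_ord1 c_neq0.
Qed.

Lemma filtrationN a : (l (- a) <= l a)%E.
Proof. by rewrite -scaleN1r filtrationZ. Qed.

Lemma filtrationD_le a b t : (l a <= t)%E -> (l b <= t)%E -> (l (a + b) <= t)%E.
Proof. by move=> la lb; apply: le_trans (filtrationD a b) _; rewrite ge_max la lb. Qed.

Lemma filtrationB_le a b t : (l a <= t)%E -> (l b <= t)%E -> (l (a - b) <= t)%E.
Proof. by move=> la lb; apply: filtrationD_le la (le_trans (filtrationN b) lb). Qed.

Lemma filtration_sum_le (I : eqType) (r : seq I) (c : I -> K) (x : I -> V) t :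
  (forall i, i \in r -> c i != 0 -> (l (x i) <= t)%E) ->
  (l (\sum_(i <- r) c i *: x i) <= t)%E.
Proof.
elim: r => [|i r IHr] lx; first by rewrite big_nil filtration0 leNye.
rewrite big_cons; apply: filtrationD_le; last by apply: IHr => j jr; apply: lx; rewrite inE jr orbT.
have [->|ci_neq0] := eqVneq (c i) 0; first by rewrite scale0r filtration0 leNye.
by apply: le_trans (filtrationZ _ _) (lx _ (mem_head _ _) ci_neq0).
Qed.

Lemma filtration_real_or_zero x : x = 0 \/ exists t : R, l x = t%:E.
Proof.
case lx: (l x) => [t||]; [by right; exists t | | by left; apply: filtration_eq0].
by have := filtration_neq_pinfty lx.
Qed.

End Filtration.

Lemma emax_over_ge (R : realType) n (P : pred 'I_n) (a : 'I_n -> \bar R) j :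
  P j -> (a j <= emax_over P a)%E.
Proof. by move=> Pj; rewrite /emax_over (bigD1 j) //= le_max lexx. Qed.

Section ProductFiltration.
Variables (K : fieldType) (R : realType) (V1 V2 : lmodType K).
Variables (l1 : V1 -> \bar R) (l2 : V2 -> \bar R).

Definition prod_filt (x : V1 * V2) : \bar R := maxe (l1 x.1) (l2 x.2).

Lemma prod_filt_axioms :
  filtration_axioms l1 -> filtration_axioms l2 -> filtration_axioms prod_filt.
Proof.
move=> hl1 hl2; split.
- move=> x; split=> [lx|->]; last by rewrite /prod_filt /= !filtration0 // maxeNy.
  have /andP[] : (l1 x.1 <= -oo)%E && (l2 x.2 <= -oo)%E by rewrite -ge_max -/(prod_filt x) lx.
  rewrite !leeNy_eq => /eqP/(filtration_eq0 hl1) x1_eq0 /eqP/(filtration_eq0 hl2).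
  by case: x x1_eq0 {lx} => /= ? ? -> ->.
- by move=> x; rewrite /prod_filt maxEle; case: ifP => _; apply: filtration_neq_pinfty.
- move=> n c x; rewrite /prod_filt (raddf_sum fst) (raddf_sum snd) /=.
  case: hl1 => _ _ /(_ n c (fun i => (x i).1)) h1; case: hl2 => _ _ /(_ n c (fun i => (x i).2)) h2.
  rewrite ge_max; apply/andP; split.
  + by apply: le_trans h1 _; apply: le_bigmax2 => i _; rewrite le_max lexx.
  + by apply: le_trans h2 _; apply: le_bigmax2 => i _; rewrite le_max lexx orbT.
Qed.

End ProductFiltration.

Section PairEmbeddings.
Variables (K : fieldType) (U V : lmodType K).

Definition in_fst (u : U) : U * V := (u, 0).
Definition in_snd (v : V) : U * V := (0, v).

Lemma in_fst_is_linear : linear in_fst.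
Proof. by move=> a x y; rewrite /in_fst; congr (_, _); rewrite addr0; apply/esym/scaler0. Qed.

Lemma in_snd_is_linear : linear in_snd.
Proof. by move=> a x y; rewrite /in_snd; congr (_, _); rewrite addr0; apply/esym/scaler0. Qed.

HB.instance Definition _ :=
  GRing.isLinear.Build K U (U * V)%type *:%R in_fst in_fst_is_linear.
HB.instance Definition _ :=
  GRing.isLinear.Build K V (U * V)%type *:%R in_snd in_snd_is_linear.

Lemma in_fst_add_in_snd (u : U) (v : V) : in_fst u + in_snd v = (u, v).
Proof. by rewrite /in_fst /in_snd; congr (_, _); rewrite ?addr0 ?add0r. Qed.

End PairEmbeddings.

Arguments in_fst {K U V}.
Arguments in_snd {K U V}.

Definition filtered_projective (K : fieldType) (R : realType) (V : lmodType K)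
    (lV : V -> \bar R) : Prop :=
  forall (W Z : lmodType K) (lW : W -> \bar R) (p : {linear W -> Z}) (phi : {linear V -> Z}),
    filtration_axioms lW ->
    (forall v, exists w, p w = phi v /\ (lW w <= lV v)%E) ->
    exists psi : {linear V -> W}, forall v, p (psi v) = phi v /\ (lW (psi v) <= lV v)%E.

Section OrthogonalBasis.
Variables (K : fieldType) (R : realType) (V : lmodType K) (lV : V -> \bar R).
Variable S : V -> Prop.
Hypotheses (S_basis : is_basis S) (S_orth : l_orthogonal lV S).

(* Formal linear combinations, as lists of (coefficient, vector) pairs, evaluated through [w]. *)
Definition comb (W : lmodType K) (w : V -> W) (r : seq (K * V)) : W :=
  \sum_(p <- r) p.1 *: w p.2.
Definition on_basis (r : seq (K * V)) := forall p, p \in r -> S p.2.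
Definition scale_comb (a : K) (r : seq (K * V)) := [seq (a * p.1, p.2) | p <- r].
Definition compress (r : seq (K * V)) :=
  [seq (\sum_(p <- r | p.2 == v) p.1, v) | v <- undup [seq p.2 | p <- r]].

Lemma comb_cat (W : lmodType K) (w : V -> W) r1 r2 :
  comb w (r1 ++ r2) = comb w r1 + comb w r2.
Proof. by rewrite /comb big_cat. Qed.

Lemma comb_scale (W : lmodType K) (w : V -> W) a r : comb w (scale_comb a r) = a *: comb w r.
Proof. by rewrite /comb big_map scaler_sumr; apply: eq_bigr => p _; rewrite scalerA. Qed.

Lemma on_basis_cat r1 r2 : on_basis r1 -> on_basis r2 -> on_basis (r1 ++ r2).
Proof. by move=> h1 h2 p; rewrite mem_cat => /orP [/h1|/h2]. Qed.

Lemma on_basis_scale a r : on_basis r -> on_basis (scale_comb a r).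
Proof. by move=> h p /mapP [q qr ->]; exact: (h q qr). Qed.

Lemma comb_exists v : exists r, on_basis r /\ v = comb id r.
Proof.
have [n [s [c [s_S ->]]]] := S_basis.1 v.
exists [seq (c i, s i) | i <- index_enum 'I_n]; split; last by rewrite /comb big_map.
by move=> p /mapP [i _ ->]; apply: s_S.
Qed.

Lemma comb_compress (W : lmodType K) (w : V -> W) r : comb w (compress r) = comb w r.
Proof.
rewrite /comb /compress big_map.
transitivity (\sum_(v <- undup [seq p.2 | p <- r])
                \sum_(p <- r) (if p.2 == v then p.1 *: w p.2 else 0)).
  apply: eq_bigr => v _; rewrite scaler_suml big_mkcond.
  by apply: eq_bigr => p _; case: eqP => // ->.
rewrite exchange_big /=; apply: eq_big_seq => p pr.
rewrite -big_mkcond /= -big_filter.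
have -> : [seq v <- undup [seq q.2 | q <- r] | p.2 == v] = [:: p.2].
  rewrite (@eq_filter _ _ (pred1 p.2)); last by move=> v; rewrite /= eq_sym.
  by apply: filter_pred1_uniq; rewrite ?undup_uniq // mem_undup map_f.
by rewrite big_seq1.
Qed.

Lemma compress_uniq r : uniq [seq p.2 | p <- compress r].
Proof. by rewrite /compress -map_comp map_id undup_uniq. Qed.

Lemma on_basis_compress r : on_basis r -> on_basis (compress r).
Proof. by move=> h q /mapP [v]; rewrite mem_undup => /mapP [p pr ->] ->; exact: (h p pr). Qed.

(* A formal combination without repeated vectors is one of the combinations
   quantified over in [is_basis] and [l_orthogonal]. *)
Lemma comb_ord r : on_basis r -> uniq [seq p.2 | p <- r] ->
  exists n (s : 'I_n -> V) (c : 'I_n -> K),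
    [/\ injective s, (forall i, S (s i)), comb id r = \sum_(i < n) c i *: s i &
        forall p, p \in r -> exists i, c i = p.1 /\ s i = p.2].
Proof.
move=> r_S r_uniq.
exists (size r), (fun i => (nth (0, 0) r i).2), (fun i => (nth (0, 0) r i).1); split.
- move=> i j /= eij; apply/val_inj/eqP.
  by rewrite -(nth_uniq 0 _ _ r_uniq) ?size_map ?ltn_ord // !(nth_map (0, 0)) ?ltn_ord ?eij.
- by move=> i; apply: r_S; rewrite mem_nth.
- by rewrite /comb (big_nth (0, 0)) big_mkord.
- move=> p pr; have pr' : (index p r < size r)%N by rewrite index_mem.
  by exists (Ordinal pr'); rewrite /= nth_index.
Qed.

Lemma comb_eq0_coef r : on_basis r -> uniq [seq p.2 | p <- r] -> comb id r = 0 ->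
  forall p, p \in r -> p.1 = 0.
Proof.
move=> r_S r_uniq r0 p pr.
have [n [s [c [s_inj s_S rE cE]]]] := comb_ord r_S r_uniq.
have [i [<- _]] := cE p pr.
by apply: (S_basis.2 n s c s_inj s_S); rewrite -rE.
Qed.

Lemma comb_filt_ge r p : on_basis r -> uniq [seq q.2 | q <- r] -> p \in r -> p.1 != 0 ->
  (lV p.2 <= lV (comb id r))%E.
Proof.
move=> r_S r_uniq pr p_neq0.
have [n [s [c [s_inj s_S -> cE]]]] := comb_ord r_S r_uniq.
have [i [ci si]] := cE p pr.
rewrite (S_orth.2 n s c s_inj s_S) -si.
by apply: (emax_over_ge (fun i => lV (s i))) => /=; rewrite ci.
Qed.

Lemma comb_eq0 (W : lmodType K) (w : V -> W) r :
  on_basis r -> comb id r = 0 -> comb w r = 0.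
Proof.
move=> r_S r0; rewrite -comb_compress /comb big_seq big1 // => p pr.
rewrite (comb_eq0_coef (on_basis_compress r_S) (compress_uniq r)) ?scale0r //.
by rewrite comb_compress.
Qed.

Lemma comb_eq (W : lmodType K) (w : V -> W) r1 r2 : on_basis r1 -> on_basis r2 ->
  comb id r1 = comb id r2 -> comb w r1 = comb w r2.
Proof.
move=> r1_S r2_S e; apply/eqP; rewrite -subr_eq0 -scaleN1r -!comb_scale -comb_cat.
apply/eqP/comb_eq0; first exact: on_basis_cat r1_S (on_basis_scale r2_S).
by rewrite comb_cat comb_scale e scaleN1r subrr.
Qed.

(* Lift each basis vector separately, then extend linearly; orthogonality
   bounds the filtration of the extension. *)
Lemma orthogonal_basis_projective : filtered_projective lV.
Proof.
move=> W Z lW p phi hlW lift.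
have [w wP] := choice lift.
have [rep repP] := choice comb_exists.
pose psi v := comb w (rep v).
have psiE r : on_basis r -> psi (comb id r) = comb w r.
  by move=> r_S; apply: comb_eq; rewrite -?(repP _).2 //; exact: (repP _).1.
have psi_linear : linear psi.
  move=> a x y; rewrite [in LHS](repP x).2 [in LHS](repP y).2 -comb_scale -comb_cat.
  rewrite psiE ?comb_cat ?comb_scale //.
  by apply: on_basis_cat; [apply: on_basis_scale|]; apply: (repP _).1.
exists (HB.pack psi (GRing.isLinear.Build K V W *:%R psi psi_linear) : {linear V -> W}).
move=> v /=; split.
- rewrite /psi {2}(repP v).2 /comb !linear_sum; apply: eq_bigr => q _.
  by rewrite !linearZ (wP _).1.
- rewrite /psi -comb_compress {2}(repP v).2 -(comb_compress id).
  apply: (filtration_sum_le hlW) => q qr q_neq0; apply: le_trans (wP _).2 _.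
  by apply: comb_filt_ge; rewrite ?compress_uniq //; apply/on_basis_compress/(repP _).1.
Qed.

End OrthogonalBasis.

Lemma filtered_projective_prod (K : fieldType) (R : realType) (V1 V2 : lmodType K)
    (l1 : V1 -> \bar R) (l2 : V2 -> \bar R) :
  filtration_axioms l1 -> filtration_axioms l2 ->
  filtered_projective l1 -> filtered_projective l2 -> filtered_projective (prod_filt l1 l2).
Proof.
move=> hl1 hl2 P1 P2 W Z lW p phi hlW lift.
have [psi1 psi1P] : exists psi : {linear V1 -> W},
    forall v, p (psi v) = (phi \o in_fst) v /\ (lW (psi v) <= l1 v)%E.
  apply: P1 => // v; have [w [pw lw]] := lift (in_fst v).
  by exists w; move: lw; rewrite /prod_filt /= (filtration0 hl2) maxeNy.
have [psi2 psi2P] : exists psi : {linear V2 -> W},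
    forall v, p (psi v) = (phi \o in_snd) v /\ (lW (psi v) <= l2 v)%E.
  apply: P2 => // v; have [w [pw lw]] := lift (in_snd v).
  by exists w; move: lw; rewrite /prod_filt /= (filtration0 hl1) maxNye.
exists ((psi1 \o fst) \+ (psi2 \o snd)) => -[v1 v2] /=; split.
  by rewrite linearD (psi1P _).1 (psi2P _).1 /= -linearD in_fst_add_in_snd.
apply: (filtrationD_le hlW).
  by apply: le_trans (psi1P v1).2 _; rewrite le_max lexx.
by apply: le_trans (psi2P v2).2 _; rewrite le_max lexx orbT.
Qed.

Section IntegerFamilies.
Variable T : int -> Type.

Definition reindex (I : Type) (h : I -> int) (F : forall i, T (h i)) (dflt : forall k, T k)
    (k : int) : T k :=
  match pselect (exists i, h i = k) with
  | left hk => let: exist i e := cid hk in eq_rect _ T (F i) _ e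
  | right _ => dflt k
  end.
Arguments reindex {I} h F dflt k.

Lemma reindexE (I : Type) (h : I -> int) F dflt i :
  injective h -> reindex h F dflt (h i) = F i.
Proof.
move=> h_inj; rewrite /reindex; case: pselect => [hk|[]]; last by exists i.
case: (cid hk) => j e; have eji : j = i by apply: h_inj.
by subst j; rewrite (eq_irrelevance e erefl).
Qed.

Lemma reindex_out (I : Type) (h : I -> int) F dflt k :
  (forall i, h i != k) -> reindex h F dflt k = dflt k.
Proof.
by move=> hk; rewrite /reindex; case: pselect => // -[i hik]; have := hk i; rewrite hik eqxx.
Qed.

End IntegerFamilies.

Arguments reindex {T I} h F dflt k.

Lemma int_ind_succ (P : int -> Prop) : (forall j, P (j + 1)) -> forall k, P k.
Proof. by move=> Psucc k; rewrite -(subrK 1 k). Qed.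

Section IntDependentChoice.
Variables (T : int -> Type) (P : forall k, T k -> Prop) (Q : forall k, T k -> T (k + 1) -> Prop).
Variables (k0 : int) (s0 : forall k, T k).
Hypotheses (P_s0 : forall k, k <= k0 -> P (s0 k))
  (Q_s0 : forall k, k < k0 -> Q (s0 k) (s0 (k + 1)))
  (P_step : forall k (s : T k), P s -> exists s' : T (k + 1), P s' /\ Q s s').

(* Not [k0 + m]: [chain] needs [upfrom m.+1] to be convertible to [upfrom m + 1]. *)
Fixpoint upfrom (m : nat) : int := if m is m'.+1 then upfrom m' + 1 else k0.

Lemma upfromE m : upfrom m = k0 + m%:Z.
Proof. by elim: m => [|m IHm] /=; [rewrite addr0 | rewrite IHm; lia]. Qed.

Fixpoint chain (m : nat) : {s : T (upfrom m) | P s} :=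
  match m return {s : T (upfrom m) | P s} with
  | 0%N => exist _ (s0 k0) (P_s0 (lexx k0))
  | m'.+1 => let: exist s Ps := chain m' in
             let: exist s' Ps' := cid (P_step Ps) in exist _ s' (proj1 Ps')
  end.

Lemma chain_step m : Q (sval (chain m)) (sval (chain m.+1)).
Proof. by rewrite /=; case: (chain m) => s Ps /=; case: (cid _) => s' []. Qed.

Lemma int_dependent_choice :
  exists s : forall k, T k, forall k, P (s k) /\ Q (s k) (s (k + 1)).
Proof.
have upfrom_inj : injective upfrom by move=> m n; rewrite !upfromE => /addrI [].
pose s := reindex upfrom (fun m => sval (chain m)) s0.
have s_upfrom m : s (upfrom m) = sval (chain m) by apply: reindexE.
have s_low k : k <= k0 -> s k = s0 k.
  rewrite le_eqVlt => /predU1P [-> | lt_k]; first exact: (s_upfrom 0%N).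
  by apply: reindex_out => m; rewrite upfromE gt_eqF // (lt_le_trans lt_k) ?lerDl.
exists s => k; have [lt_k | le_k] := ltP k k0.
  have le_k1 : k + 1 <= k0 by lia.
  by rewrite !s_low ?(ltW lt_k) //; split; [apply/P_s0/ltW | apply: Q_s0].
have [m <-] : exists m, upfrom m = k.
  by exists `|k - k0|%N; rewrite upfromE gez0_abs ?subr_ge0 // addrCA subrr addr0.
by rewrite s_upfrom (s_upfrom m.+1); split; [exact: svalP | exact: chain_step].
Qed.

End IntDependentChoice.

Definition filtered_acyclic (K : fieldType) (R : realType) (X : ascending_complex K R) : Prop :=
  forall (k : int) (z : obj X (k + 1)), bd X k z = 0 ->
    exists w : obj X (k + 1 + 1),
      bd X (k + 1) w = z /\ (filt X (k + 1 + 1) w <= filt X (k + 1) z)%E.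

Section FilteredContraction.
Variables (K : fieldType) (R : realType) (X : ascending_complex K R) (k0 : int).
Hypotheses (X_proj : forall k, filtered_projective (filt X k))
  (X_vanish : forall k, k < k0 -> forall x : obj X k, x = 0)
  (X_acyclic : filtered_acyclic X).

(* The induction invariant: [s] splits the differential out of degree [k + 1],
   so that [v - s (bd v)] is always a cycle. *)
Definition partial_contraction k (s : {linear obj X k -> obj X (k + 1)}) : Prop :=
  (forall x, (filt X (k + 1) (s x) <= filt X k x)%E) /\
  (forall v : obj X (k + 1), bd X k (s (bd X k v)) = bd X k v).

Definition homotopy_step k (s : {linear obj X k -> obj X (k + 1)})
    (s' : {linear obj X (k + 1) -> obj X (k + 1 + 1)}) : Prop :=
  forall x : obj X (k + 1), bd X (k + 1) (s' x) + s (bd X k x) = x.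

Lemma partial_contraction_step k (s : {linear obj X k -> obj X (k + 1)}) :
  partial_contraction s ->
  exists s', partial_contraction s' /\ homotopy_step s s'.
Proof.
move=> [s_filt s_split].
have [|s' s'P] := @X_proj (k + 1) _ _ _ (bd X (k + 1)) (idfun \- (s \o bd X k)) (filt_ax _ _ X _).
  move=> v; have cycle_v : bd X k (v - s (bd X k v)) = 0 by rewrite linearB s_split subrr.
  have [w [bd_w lw]] := X_acyclic cycle_v; exists w; split=> //.
  apply: le_trans lw _; apply: (filtrationB_le (filt_ax _ _ X _)) => //.
  exact: le_trans (s_filt _) (filt_bd _ _ X _ _).
exists s'; split; [split|].
- by move=> x; apply: (s'P x).2.
- by move=> v; rewrite (s'P _).1 /= bd_bd linear0 subr0.
- by move=> x; rewrite (s'P x).1 /= subrK.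
Qed.

Theorem filtered_contraction : exists s : forall k, {linear obj X k -> obj X (k + 1)},
  (forall k x, (filt X (k + 1) (s k x) <= filt X k x)%E) /\
  (forall k (x : obj X (k + 1)), bd X (k + 1) (s (k + 1) x) + s k (bd X k x) = x).
Proof.
have [|k lt_k|k s|s sP] := int_dependent_choice (P := partial_contraction) (Q := homotopy_step)
    (k0 := k0 - 1) (s0 := fun k => \0).
- move=> k le_k; split=> [x|v]; first by rewrite (filtration0 (filt_ax _ _ X _)) leNye.
  have lt_k : k < k0 by lia.
  by rewrite [LHS](X_vanish lt_k) [RHS](X_vanish lt_k).
- have lt_k1 : k + 1 < k0 by lia.
  by move=> x; rewrite [LHS](X_vanish lt_k1) [RHS](X_vanish lt_k1).
- exact: partial_contraction_step.
- by exists s; split=> k; [apply: (sP k).1.1 | apply: (sP k).2].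
Qed.

End FilteredContraction.

Section MappingCone.
Variables (K : fieldType) (R : realType) (C D : ascending_complex K R).
Variable f : forall k : int, {linear obj C k -> obj D k}.
Hypothesis f_chain : filtered_chain_map f.

Definition cone_obj (j : int) : lmodType K := (obj C j * obj D (j + 1))%type.

Definition cone_bd (j : int) (x : cone_obj (j + 1)) : cone_obj j :=
  (- bd C j x.1, f (j + 1) x.1 + bd D (j + 1) x.2).
Arguments cone_bd : clear implicits.

Lemma cone_bd_is_linear j : linear (cone_bd j).
Proof.
move=> a x y; rewrite /cone_bd; congr (_, _) => /=.
  by rewrite linearP opprD scalerN.
by rewrite !linearP scalerDr addrACA.
Qed.

HB.instance Definition _ (j : int) := GRing.isLinear.Build K (cone_obj (j + 1)) (cone_obj j)
  *:%R (cone_bd j) (@cone_bd_is_linear j).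

Definition cone_filt (j : int) : cone_obj j -> \bar R := prod_filt (filt C j) (filt D (j + 1)).
Arguments cone_filt : clear implicits.

Lemma cone_bd_bd j (x : cone_obj (j + 1 + 1)) : cone_bd j (cone_bd (j + 1) x) = 0.
Proof.
rewrite /cone_bd /=; congr (_, _); first by rewrite linearN opprK bd_bd.
by rewrite linearN linearD bd_bd addr0 f_chain.1 addNr.
Qed.

Lemma cone_filt_axioms j : filtration_axioms (cone_filt j).
Proof. exact: prod_filt_axioms (filt_ax _ _ C j) (filt_ax _ _ D (j + 1)). Qed.

Lemma cone_filt_bd j (x : cone_obj (j + 1)) : (cone_filt j (cone_bd j x) <= cone_filt (j + 1) x)%E.
Proof.
rewrite /cone_filt /prod_filt /= ge_max; apply/andP; split.
  by rewrite le_max (le_trans (filtrationN (filt_ax _ _ C j) _) (filt_bd _ _ C _ _)).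
apply: (filtrationD_le (filt_ax _ _ D _)).
  by rewrite le_max (le_trans (f_chain.2 _ _) (lexx _)).
by rewrite le_max (filt_bd _ _ D) orbT.
Qed.

Definition cone : ascending_complex K R :=
  @AscComplex K R cone_obj (fun j => cone_bd j : {linear _ -> _}) cone_filt
    cone_bd_bd cone_filt_axioms cone_filt_bd.

Lemma cone_projective :
  (forall k, has_orthogonal_basis (filt C k)) -> (forall k, has_orthogonal_basis (filt D k)) ->
  forall j, filtered_projective (filt cone j).
Proof.
move=> hC hD j; have [SC [SC_basis SC_orth]] := hC j; have [SD [SD_basis SD_orth]] := hD (j + 1).
exact: filtered_projective_prod (filt_ax _ _ C j) (filt_ax _ _ D (j + 1))
  (orthogonal_basis_projective SC_basis SC_orth) (orthogonal_basis_projective SD_basis SD_orth).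
Qed.

Lemma cone_vanish :
  (forall k, k < 0 -> forall x : obj C k, x = 0) ->
  (forall k, k < 0 -> forall y : obj D k, y = 0) ->
  forall j, j < -1 -> forall x : obj cone j, x = 0.
Proof.
move=> zC zD j lt_j [c d].
have lt_j0 : j < 0 by lia.
have lt_j1 : j + 1 < 0 by lia.
by rewrite (zC _ lt_j0 c) (zD _ lt_j1 d).
Qed.

(* Injectivity of [f] in homology corrects the [C]-component of a cycle [(c, d)]
   to a boundary; surjectivity then accounts for the remaining cycle of [D]. *)
Lemma cone_filtered_acyclic : filtered_quasi_iso f -> filtered_acyclic cone.
Proof.
move=> f_qiso j [c d] /= cd_cycle.
have /= /eqP := congr1 fst cd_cycle; rewrite oppr_eq0 => /eqP bd_c.
have /= f_c := congr1 snd cd_cycle.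
have [->|[t lcd]] := filtration_real_or_zero (cone_filt_axioms (j + 1)) (c, d).
  by exists 0; rewrite linear0 !(filtration0 (cone_filt_axioms _)).
rewrite lcd; move: lcd; rewrite /cone_filt /prod_filt /= => /eqP; rewrite eq_le ge_max.
move=> /andP[/andP[lc ld] _].
have [|w' [lw' c_bd]] := (f_qiso j t).2 c lc bd_c.
  exists (- d); split.
    exact: le_trans (filtrationN (filt_ax _ _ D _) _) ld.
  by rewrite linearN; apply/eqP; rewrite -addr_eq0; apply/eqP.
have ly : (filt D (j + 1 + 1) (d + f (j + 1 + 1) w') <= t%:E)%E.
  apply: (filtrationD_le (filt_ax _ _ D _)) => //.
  exact: le_trans (f_chain.2 _ _) lw'.
have bd_y : bd D (j + 1) (d + f (j + 1 + 1) w') = 0.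
  by rewrite linearD -(f_chain.1 (j + 1) w') -c_bd -f_c [LHS]addrC.
have [x [lx bd_x [z' [lz' y_fx]]]] := (f_qiso (j + 1) t).1 _ ly bd_y.
exists (x - w', z'); split.
  congr (_, _) => /=; first by rewrite linearB bd_x -c_bd sub0r opprK.
  by rewrite -y_fx linearB [LHS]addrC -(addrA (d + _)) addKr addrK.
rewrite ge_max /= lz' andbT.
apply: (filtrationB_le (filt_ax _ _ C _)) lx lw'.
Qed.

End MappingCone.

Section ConeContraction.
Variables (K : fieldType) (R : realType) (C D : ascending_complex K R).
Variable f : forall k : int, {linear obj C k -> obj D k}.
Hypothesis f_chain : filtered_chain_map f.
Local Notation X := (cone f_chain).
Variable s : forall j, {linear obj X j -> obj X (j + 1)}.
Hypotheses (s_filt : forall j x, (filt X (j + 1) (s j x) <= filt X j x)%E)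
  (s_htpy : forall j (x : obj X (j + 1)), bd X (j + 1) (s (j + 1) x) + s j (bd X j x) = x).

(* On [D_(j+1)], [s j] has components in [C_(j+1)] and [D_(j+2)]: they give [g] and [K^D]
   in degree [j + 1], hence the reindexing. *)
Definition homotopy_inv : forall k, {linear obj D k -> obj C k} :=
  @reindex (fun k => {linear obj D k -> obj C k}) _ (fun j => j + 1)
    (fun j => fst \o s j \o in_snd) (fun k => \0).

Definition homotopy_C k : {linear obj C k -> obj C (k + 1)} := \- (fst \o s k \o in_fst).

Definition homotopy_D : forall k, {linear obj D k -> obj D (k + 1)} :=
  @reindex (fun k => {linear obj D k -> obj D (k + 1)}) _ (fun j => j + 1)
    (fun j => snd \o s j \o in_snd) (fun k => \0).

Lemma homotopy_invE j d : homotopy_inv (j + 1) d = (s j (in_snd d)).1.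
Proof. by rewrite /homotopy_inv reindexE //; apply: addIr. Qed.

Lemma homotopy_DE j d : homotopy_D (j + 1) d = (s j (in_snd d)).2.
Proof. by rewrite /homotopy_D reindexE //; apply: addIr. Qed.

Lemma cone_bd_in_snd j (d : obj D (j + 1 + 1)) : bd X j (in_snd d) = in_snd (bd D (j + 1) d).
Proof. by congr (_, _); rewrite /= !linear0 ?oppr0 ?add0r. Qed.

Lemma cone_bd_in_fst j (c : obj C (j + 1)) : bd X j (in_fst c) = (- bd C j c, f (j + 1) c).
Proof. by congr (_, _); rewrite /= linear0 addr0. Qed.

Lemma cone_filt_in_snd j (d : obj D (j + 1)) : filt X j (in_snd d) = filt D (j + 1) d.
Proof. by rewrite /= /cone_filt /prod_filt /= (filtration0 (filt_ax _ _ C _)) maxNye. Qed.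

Lemma cone_filt_in_fst j (c : obj C j) : filt X j (in_fst c) = filt C j c.
Proof. by rewrite /= /cone_filt /prod_filt /= (filtration0 (filt_ax _ _ D _)) maxeNy. Qed.

Lemma homotopy_inv_chain : filtered_chain_map homotopy_inv.
Proof.
split; elim/int_ind_succ => j x.
  have /= /eqP := congr1 fst (@s_htpy j (in_snd x)).
  by rewrite cone_bd_in_snd !homotopy_invE addr_eq0 eqr_opp => /eqP <-.
rewrite homotopy_invE -(cone_filt_in_snd x); apply: le_trans (@s_filt j (in_snd x)).
by rewrite /= /cone_filt /prod_filt le_max lexx.
Qed.

Lemma homotopy_C_filt k (c : obj C k) : (filt C (k + 1) (homotopy_C k c) <= filt C k c)%E.
Proof.
apply: le_trans (filtrationN (filt_ax _ _ C _) _) _.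
rewrite -(cone_filt_in_fst c); apply: le_trans (@s_filt k (in_fst c)).
by rewrite /= /cone_filt /prod_filt le_max lexx.
Qed.

Lemma homotopy_D_filt k (d : obj D k) : (filt D (k + 1) (homotopy_D k d) <= filt D k d)%E.
Proof.
elim/int_ind_succ: k d => j d; rewrite homotopy_DE -(cone_filt_in_snd d).
apply: le_trans (@s_filt j (in_snd d)).
by rewrite /= /cone_filt /prod_filt le_max lexx orbT.
Qed.

Lemma homotopy_C_eq k (c : obj C (k + 1)) :
  bd C (k + 1) (homotopy_C (k + 1) c) + homotopy_C k (bd C k c) =
    c - homotopy_inv (k + 1) (f (k + 1) c).
Proof.
have pair_eq : (- bd C k c, f (k + 1) c) = - in_fst (bd C k c) + in_snd (f (k + 1) c) :> obj X k.
  by congr (_, _); rewrite /= ?oppr0 ?addr0 ?add0r.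
have /= := congr1 fst (@s_htpy k (in_fst c)).
rewrite cone_bd_in_fst pair_eq linearD linearN /= -homotopy_invE => htpy_c.
by rewrite /= linearN -[X in _ = X - _]htpy_c (addrA (- _)) addrK.
Qed.

Lemma homotopy_D_eq k (d : obj D (k + 1)) :
  bd D (k + 1) (homotopy_D (k + 1) d) + homotopy_D k (bd D k d) =
    d - f (k + 1) (homotopy_inv (k + 1) d).
Proof.
elim/int_ind_succ: k d => j d; have /= := congr1 snd (@s_htpy j (in_snd d)).
rewrite cone_bd_in_snd => htpy_d.
rewrite !homotopy_DE homotopy_invE -[X in _ = X - _]htpy_d -(addrA (f _ _)).
by rewrite [X in _ = X - _]addrC addrK.
Qed.

Lemma cone_contraction_homotopy_equiv : filtered_homotopy_equiv f.
Proof.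
split=> //; exists homotopy_inv, homotopy_C, homotopy_D; split.
- exact: homotopy_inv_chain.
- exact: homotopy_C_filt.
- exact: homotopy_D_filt.
- exact: homotopy_C_eq.
- exact: homotopy_D_eq.
Qed.

End ConeContraction.

Theorem proposition4p2 (kappa : fieldType) (R : realType)
    (C D : ascending_complex kappa R) :
  (forall k : int, has_orthogonal_basis (@filt _ _ C k)) ->
  (forall k : int, has_orthogonal_basis (@filt _ _ D k)) ->
  (forall k : int, k < 0 -> forall x : obj C k, x = 0) ->
  (forall k : int, k < 0 -> forall y : obj D k, y = 0) ->
  forall f : forall k : int, {linear obj C k -> obj D k},
    filtered_chain_map f -> filtered_quasi_iso f ->
    filtered_homotopy_equiv f.
Proof.
move=> hC hD zC zD f f_chain f_qiso.
have [s [s_filt s_htpy]] := filtered_contraction (cone_projective hC hD) (cone_vanish zC zD)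
  (cone_filtered_acyclic (f_chain := f_chain) f_qiso).
exact: cone_contraction_homotopy_equiv s_filt s_htpy.
Qed.
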